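(* Consider Picard's case of the sixth Painlevé equation, $\ddot q=\frac12\left(\frac1q+\frac1{q-1}+\frac1{q-t}\right)\dot q^2-\left(\frac1t+\frac1{t-1}+\frac1{q-t}\right)\dot q+\frac{q(q-1)(q-t)}{t^2(t-1)^2}\cdot\frac12\cdot\frac{t(t-1)}{(q-t)^2}$ (i.e. $\alpha=\beta=\gamma=0$, $\delta=\frac12$). Parametrize the independent variable by $s\in\mathbb C$ via $t=\frac{s^3(s+2)}{2s+1}$. Then the transformation $(q,t)\mapsto(\tilde q,\tilde t)$, $$\tilde t=\frac{s(s+2)^3}{(2s+1)^3},\qquad \tilde q=\frac{q\,(q+s(s+2))^2}{((2s+1)q+s^2)^2},$$ preserves this equation: if $q(t)$ is a solution, then $\tilde q$, regarded as a function of $\tilde t$, is again a solution of the same equation. *)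

From Stdlib Require Import Reals.
From Coquelicot Require Import Coquelicot.

Open Scope C_scope.

Definition cderiv (f : C -> C) (z l : C) : Prop :=
  @is_derive C_AbsRing C_NormedModule f z l.

Definition PVI_rhs (t q dq : C) : C :=
  RtoC (1/2) * (/ q + / (q - 1) + / (q - t)) * dq ^ 2
  - (/ t + / (t - 1) + / (q - t)) * dq
  + q * (q - 1) * (q - t) / (t ^ 2 * (t - 1) ^ 2)
    * (RtoC 0 + RtoC 0 * t / q ^ 2 + RtoC 0 * (t - 1) / (q - 1) ^ 2
       + RtoC (1/2) * (t * (t - 1)) / (q - t) ^ 2).

Definition PVI_sol_at (q dq ddq : C -> C) (t : C) : Prop :=
  t <> 0 /\ t <> 1 /\ q t <> 0 /\ q t <> 1 /\ q t <> t /\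
  locally t (fun x => cderiv q x (dq x)) /\
  cderiv dq t (ddq t) /\
  ddq t = PVI_rhs t (q t) (dq t).

Definition t_of (s : C) : C := s ^ 3 * (s + RtoC 2) / (RtoC 2 * s + 1).

Definition tt_of (s : C) : C :=
  s * (s + RtoC 2) ^ 3 / (RtoC 2 * s + 1) ^ 3.

Definition qt_of (q s : C) : C :=
  q * (q + s * (s + RtoC 2)) ^ 2 / ((RtoC 2 * s + 1) * q + s ^ 2) ^ 2.

(* Write u(s) = q(t(s)) and Q(s) = qt(tt(s)). The transformation says
   Q * D(s,u)^2 = N(s,u) on the open set U, with D, N polynomial. Both sides are
   holomorphic there, so the identity may be differentiated twice in s; by the chain
   rule this expresses qt' and qt'' at tt(s) through q, q', q'' at t(s). Replacing q''
   by the right-hand side of PVI leaves a rational identity in s, q, q', checked by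
   [field], which says that qt'' is the right-hand side of PVI at (tt, qt, qt'). *)

From Stdlib Require Import Reals Lra Psatz.
From Coquelicot Require Import Coquelicot.
Open Scope C_scope.

(* Coquelicot's product and chain rules are stated with the codomain C seen as
   [AbsRing_NormedModule C_AbsRing], whose uniform structure differs from that of
   [C_NormedModule] used by [cderiv]. *)
Lemma cderiv_AbsRing f x a :
  cderiv f x a -> @is_derive C_AbsRing (AbsRing_NormedModule C_AbsRing) f x a.
Proof. intros [_ Hd]. split; [apply is_linear_scal_l | exact Hd]. Qed.

Lemma cderiv_of_AbsRing f x a :
  @is_derive C_AbsRing (AbsRing_NormedModule C_AbsRing) f x a -> cderiv f x a.
Proof. intros [_ Hd]. split; [apply is_linear_scal_l | exact Hd]. Qed.

Lemma cderiv_eq f x a b : cderiv f x a -> a = b -> cderiv f x b.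
Proof. now intros H <-. Qed.

Lemma cderiv_const (c x : C) : cderiv (fun _ => c) x 0.
Proof. exact (@is_derive_const C_AbsRing C_NormedModule c x). Qed.

Lemma cderiv_id (x : C) : cderiv (fun y => y) x 1.
Proof. exact (cderiv_of_AbsRing _ _ _ (@is_derive_id C_AbsRing x)). Qed.

Lemma cderiv_plus f g x a b :
  cderiv f x a -> cderiv g x b -> cderiv (fun y => f y + g y) x (a + b).
Proof. exact (@is_derive_plus C_AbsRing C_NormedModule f g x a b). Qed.

Lemma cderiv_minus f g x a b :
  cderiv f x a -> cderiv g x b -> cderiv (fun y => f y - g y) x (a - b).
Proof. exact (@is_derive_minus C_AbsRing C_NormedModule f g x a b). Qed.

Lemma cderiv_mult f g x a b :
  cderiv f x a -> cderiv g x b -> cderiv (fun y => f y * g y) x (a * g x + f x * b).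
Proof.
  intros Hf Hg. apply cderiv_of_AbsRing.
  exact (is_derive_mult f g x a b (cderiv_AbsRing _ _ _ Hf) (cderiv_AbsRing _ _ _ Hg)
    Cmult_comm).
Qed.

Lemma cderiv_comp f g x a b :
  cderiv f (g x) a -> cderiv g x b -> cderiv (fun y => f (g y)) x (b * a).
Proof.
  intros Hf Hg.
  exact (@is_derive_comp C_AbsRing C_NormedModule f g x a b Hf (cderiv_AbsRing _ _ _ Hg)).
Qed.

Lemma cderiv_Cinv (z : C) : z <> 0 -> cderiv Cinv z (- / z ^ 2).
Proof.
  intros Hz. split; [apply is_linear_scal_l|].
  intros x Hx.
  apply (@is_filter_lim_locally_unique C_AbsRing (AbsRing_NormedModule C_AbsRing)) in Hx.
  subst x. intros [eps Heps]. simpl.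
  set (m := Cmod z).
  assert (Hm : (0 < m)%R) by now apply Cmod_gt_0.
  assert (Hdelta : (0 < Rmin (m / 2) (eps * m ^ 3 / 2))%R).
  { apply Rmin_pos; [lra|]. assert (0 < m ^ 3)%R by now apply pow_lt. nra. }
  exists (mkposreal _ Hdelta). intros y Hy. change C in y.
  change (Cmod (y - z) < Rmin (m / 2) (eps * m ^ 3 / 2))%R in Hy.
  change (Cmod (/ y - / z - (y - z) * - / z ^ 2) <= eps * Cmod (y - z))%R.
  set (r := Cmod (y - z)) in *.
  assert (Hr : (0 <= r)%R) by apply Cmod_ge_0.
  assert (Hr1 : (r < m / 2)%R) by (eapply Rlt_le_trans; [exact Hy | apply Rmin_l]).
  assert (Hr2 : (r <= eps * m ^ 3 / 2)%R) by (apply Rlt_le, (Rlt_le_trans _ _ _ Hy), Rmin_r).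
  (* reverse triangle inequality: |y| >= |z| - |y - z| > |z| / 2 *)
  assert (Hy_big : (m / 2 < Cmod y)%R).
  { assert (Cmod z <= Cmod y + Cmod (z - y))%R.
    { replace z with (y + (z - y)) at 1 by ring. apply Cmod_triangle. }
    replace (z - y) with (- (y - z)) in H by ring. rewrite Cmod_opp in H. fold m r in H. lra. }
  assert (Hy0 : y <> 0).
  { intros ->. rewrite Cmod_0 in Hy_big. lra. }
  replace (/ y - / z - (y - z) * - / z ^ 2) with ((y - z) ^ 2 / (y * z ^ 2)) by (field; auto).
  rewrite Cmod_div, Cmod_mult, !Cmod_pow by (apply Cmult_neq_0; [|apply Cpow_nz]; auto).
  fold m r. apply Rle_div_l; [apply Rmult_lt_0_compat; nra|].
  simpl in *.
  assert (eps * r * (m / 2 * (m * m)) <= eps * r * (Cmod y * (m * m)))%R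
    by (apply Rmult_le_compat_l; [nra | apply Rmult_le_compat_r; nra]).
  nra.
Qed.

Lemma cderiv_div f g x a b : cderiv f x a -> cderiv g x b -> g x <> 0 ->
  cderiv (fun y => f y / g y) x ((a * g x - f x * b) / g x ^ 2).
Proof.
  intros Hf Hg Hgx. eapply cderiv_eq.
  - apply (cderiv_mult f (fun y => / g y)); [exact Hf|].
    exact (cderiv_comp Cinv g x _ _ (cderiv_Cinv _ Hgx) Hg).
  - field. exact Hgx.
Qed.

(* [Cpow] unfolds to iterated products, so powers are differentiated by the product rule. *)
Ltac cderiv_tac :=
  repeat match goal with
  | |- cderiv _ _ _ => eassumption
  | |- cderiv (fun _ => ?c) _ _ => apply cderiv_const
  | |- cderiv (fun y => y) _ _ => apply cderiv_id
  | |- cderiv (fun y => @?f y + @?g y) _ _ => apply (cderiv_plus f g)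
  | |- cderiv (fun y => @?f y - @?g y) _ _ => apply (cderiv_minus f g)
  | |- cderiv (fun y => @?f y * @?g y) _ _ => apply (cderiv_mult f g)
  | |- cderiv (fun y => @?f y / @?g y) _ _ => apply (cderiv_div f g)
  | |- cderiv (fun y => @?f y ^ 0) _ _ => apply (cderiv_const 1)
  | |- cderiv (fun y => @?f y ^ S ?n) _ _ => apply (cderiv_mult f (fun y => f y ^ n))
  | |- cderiv (fun y => ?F (@?g y)) _ _ => eapply (cderiv_comp F g); [eassumption|]
  end.

Definition dt_of (s : C) : C := RtoC 6 * s ^ 2 * (s + 1) ^ 2 / (RtoC 2 * s + 1) ^ 2.
Definition ddt_of (s : C) : C :=
  RtoC 12 * s * (s + 1) * (RtoC 2 * s ^ 2 + RtoC 2 * s + 1) / (RtoC 2 * s + 1) ^ 3.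
Definition dtt_of (s : C) : C := RtoC 2 * (s - 1) ^ 2 * (s + RtoC 2) ^ 2 / (RtoC 2 * s + 1) ^ 4.
Definition ddtt_of (s : C) : C := RtoC 36 * (s - 1) * (s + RtoC 2) / (RtoC 2 * s + 1) ^ 5.

Section Parametrization.

Variable s : C.
Hypothesis s_regular : RtoC 2 * s + 1 <> 0.

Lemma cderiv_t_of : cderiv t_of s (dt_of s).
Proof.
  eapply cderiv_eq; [unfold t_of; cderiv_tac; exact s_regular|].
  unfold dt_of. field. exact s_regular.
Qed.

Lemma cderiv_dt_of : cderiv dt_of s (ddt_of s).
Proof.
  eapply cderiv_eq; [unfold dt_of; cderiv_tac; apply Cpow_nz, s_regular|].
  unfold ddt_of. field. exact s_regular.
Qed.

Lemma cderiv_tt_of : cderiv tt_of s (dtt_of s).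
Proof.
  eapply cderiv_eq; [unfold tt_of; cderiv_tac; apply Cpow_nz, s_regular|].
  unfold dtt_of. field. exact s_regular.
Qed.

Lemma cderiv_dtt_of : cderiv dtt_of s (ddtt_of s).
Proof.
  eapply cderiv_eq; [unfold dtt_of; cderiv_tac; apply Cpow_nz, s_regular|].
  unfold ddtt_of. field. exact s_regular.
Qed.

End Parametrization.

Lemma locally_C_AbsRing (x : C) (P : C -> Prop) :
  locally x P -> @locally (AbsRing_UniformSpace C_AbsRing) x P.
Proof.
  intros H. destruct (locally_norm_le_locally (V := C_NormedModule) x P H) as [e He].
  exists e. exact He.
Qed.

Lemma cderiv_unique_loc f g x a b :
  locally x (fun y => f y = g y) -> cderiv f x a -> cderiv g x b -> a = b.
Proof.
  intros Hfg Hf Hg.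
  apply (is_derive_ext_loc _ _ _ _ (locally_C_AbsRing _ _ Hfg)) in Hf.
  now rewrite <- (is_C_derive_unique _ _ _ Hf), (is_C_derive_unique _ _ _ Hg).
Qed.

Section AgreeOnOpen.

Variables (U : C -> Prop) (F G F1 G1 : C -> C).
Hypothesis U_open : open U.
Hypothesis FG : forall z, U z -> F z = G z.
Hypothesis F_deriv : forall z, U z -> cderiv F z (F1 z).
Hypothesis G_deriv : forall z, U z -> cderiv G z (G1 z).

Lemma cderiv_agree_on_open z : U z -> F1 z = G1 z.
Proof.
  intros Hz. apply (cderiv_unique_loc F G z); auto.
  exact (filter_imp U _ FG (U_open z Hz)).
Qed.

Lemma cderiv2_agree_on_open z a b : U z -> cderiv F1 z a -> cderiv G1 z b -> a = b.
Proof.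
  intros Hz. apply cderiv_unique_loc.
  exact (filter_imp U _ cderiv_agree_on_open (U_open z Hz)).
Qed.

End AgreeOnOpen.

(* [qt_of u s = qnum s u / qden s u ^ 2]; [qden1], [qnum1] (resp. [qden2], [qnum2]) are the
   first (second) derivatives of [qden s (u s)], [qnum s (u s)] in terms of the jet of [u]. *)
Definition qden (s u : C) : C := (RtoC 2 * s + 1) * u + s ^ 2.
Definition qden1 (s u u1 : C) : C := RtoC 2 * u + (RtoC 2 * s + 1) * u1 + RtoC 2 * s.
Definition qden2 (s u1 u2 : C) : C := RtoC 4 * u1 + (RtoC 2 * s + 1) * u2 + RtoC 2.

Definition qnum (s u : C) : C := u * (u + s * (s + RtoC 2)) ^ 2.
Definition qnum1 (s u u1 : C) : C :=
  u1 * (u + s * (s + RtoC 2)) ^ 2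
  + RtoC 2 * u * (u + s * (s + RtoC 2)) * (u1 + RtoC 2 * s + RtoC 2).
Definition qnum2 (s u u1 u2 : C) : C :=
  u2 * (u + s * (s + RtoC 2)) ^ 2
  + RtoC 4 * u1 * (u + s * (s + RtoC 2)) * (u1 + RtoC 2 * s + RtoC 2)
  + RtoC 2 * u * (u1 + RtoC 2 * s + RtoC 2) ^ 2
  + RtoC 2 * u * (u + s * (s + RtoC 2)) * (u2 + RtoC 2).

Section Jets.

Variables (u u1 : C -> C) (x b : C).
Hypothesis u_deriv : cderiv u x (u1 x).
Hypothesis u1_deriv : cderiv u1 x b.

Lemma cderiv_qden : cderiv (fun y => qden y (u y)) x (qden1 x (u x) (u1 x)).
Proof. eapply cderiv_eq; [unfold qden; cderiv_tac | unfold qden1; ring]. Qed.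

Lemma cderiv_qden1 : cderiv (fun y => qden1 y (u y) (u1 y)) x (qden2 x (u1 x) b).
Proof. eapply cderiv_eq; [unfold qden1; cderiv_tac | unfold qden2; ring]. Qed.

Lemma cderiv_qnum : cderiv (fun y => qnum y (u y)) x (qnum1 x (u x) (u1 x)).
Proof. eapply cderiv_eq; [unfold qnum; cderiv_tac | unfold qnum1; ring]. Qed.

Lemma cderiv_qnum1 : cderiv (fun y => qnum1 y (u y) (u1 y)) x (qnum2 x (u x) (u1 x) b).
Proof. eapply cderiv_eq; [unfold qnum1; cderiv_tac | unfold qnum2; ring]. Qed.

End Jets.

Section Pullback.

Variables (f f1 f2 g g1 g2 : C -> C) (x : C).
Hypothesis f_deriv : cderiv f (g x) (f1 (g x)).
Hypothesis g_deriv : cderiv g x (g1 x).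

Lemma cderiv_pullback : cderiv (fun y => f (g y)) x (f1 (g x) * g1 x).
Proof. eapply cderiv_eq; [exact (cderiv_comp f g x _ _ f_deriv g_deriv) | ring]. Qed.

Hypothesis f1_deriv : cderiv f1 (g x) (f2 (g x)).
Hypothesis g1_deriv : cderiv g1 x (g2 x).

Lemma cderiv2_pullback :
  cderiv (fun y => f1 (g y) * g1 y) x (f2 (g x) * g1 x ^ 2 + f1 (g x) * g2 x).
Proof. eapply cderiv_eq; [cderiv_tac | ring]. Qed.

End Pullback.

Section PulledBackRelation.

Variables (U : C -> Prop) (q dq ddq qt dqt ddqt : C -> C).
Hypothesis U_open : open U.
Hypothesis U_regular : forall s, U s -> RtoC 2 * s + 1 <> 0.
Hypothesis q_deriv : forall s, U s -> cderiv q (t_of s) (dq (t_of s)).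
Hypothesis dq_deriv : forall s, U s -> cderiv dq (t_of s) (ddq (t_of s)).
Hypothesis qt_deriv : forall s, U s -> cderiv qt (tt_of s) (dqt (tt_of s)).
Hypothesis dqt_deriv : forall s, U s -> cderiv dqt (tt_of s) (ddqt (tt_of s)).
Hypothesis qt_relation :
  forall s, U s -> qt (tt_of s) * qden s (q (t_of s)) ^ 2 = qnum s (q (t_of s)).

Let u s := q (t_of s).
Let u1 s := dq (t_of s) * dt_of s.
Let u2 s := ddq (t_of s) * dt_of s ^ 2 + dq (t_of s) * ddt_of s.
Let Q s := qt (tt_of s).
Let Q1 s := dqt (tt_of s) * dtt_of s.
Let Q2 s := ddqt (tt_of s) * dtt_of s ^ 2 + dqt (tt_of s) * ddtt_of s.

Let u_deriv s (Hs : U s) : cderiv u s (u1 s).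
Proof.
  exact (cderiv_pullback q dq t_of dt_of s (q_deriv s Hs) (cderiv_t_of s (U_regular s Hs))).
Qed.

Let u1_deriv s (Hs : U s) : cderiv u1 s (u2 s).
Proof.
  exact (cderiv2_pullback dq ddq t_of dt_of ddt_of s (cderiv_t_of s (U_regular s Hs))
    (dq_deriv s Hs) (cderiv_dt_of s (U_regular s Hs))).
Qed.

Let Q_deriv s (Hs : U s) : cderiv Q s (Q1 s).
Proof.
  exact (cderiv_pullback qt dqt tt_of dtt_of s (qt_deriv s Hs)
    (cderiv_tt_of s (U_regular s Hs))).
Qed.

Let Q1_deriv s (Hs : U s) : cderiv Q1 s (Q2 s).
Proof.
  exact (cderiv2_pullback dqt ddqt tt_of dtt_of ddtt_of s (cderiv_tt_of s (U_regular s Hs))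
    (dqt_deriv s Hs) (cderiv_dtt_of s (U_regular s Hs))).
Qed.

Let F s := Q s * qden s (u s) ^ 2.
Let F1 s := Q1 s * qden s (u s) ^ 2 + Q s * (RtoC 2 * qden s (u s) * qden1 s (u s) (u1 s)).
Let G s := qnum s (u s).
Let G1 s := qnum1 s (u s) (u1 s).

Let F_deriv s (Hs : U s) : cderiv F s (F1 s).
Proof.
  pose proof (Q_deriv s Hs). pose proof (cderiv_qden u u1 s (u_deriv s Hs)).
  eapply cderiv_eq; [unfold F; cderiv_tac | unfold F1; ring].
Qed.

Let G_deriv s (Hs : U s) : cderiv G s (G1 s).
Proof. exact (cderiv_qnum u u1 s (u_deriv s Hs)). Qed.

Lemma pulled_back_relation_deriv1 s : U s ->
  Q1 s * qden s (u s) ^ 2 + Q s * (RtoC 2 * qden s (u s) * qden1 s (u s) (u1 s))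
  = qnum1 s (u s) (u1 s).
Proof. exact (cderiv_agree_on_open U F G F1 G1 U_open qt_relation F_deriv G_deriv s). Qed.

Lemma pulled_back_relation_deriv2 s : U s ->
  Q2 s * qden s (u s) ^ 2 + RtoC 2 * Q1 s * (RtoC 2 * qden s (u s) * qden1 s (u s) (u1 s))
  + Q s * (RtoC 2 * (qden1 s (u s) (u1 s) ^ 2 + qden s (u s) * qden2 s (u1 s) (u2 s)))
  = qnum2 s (u s) (u1 s) (u2 s).
Proof.
  intros Hs.
  apply (cderiv2_agree_on_open U F G F1 G1 U_open qt_relation F_deriv G_deriv s _ _ Hs).
  - pose proof (Q_deriv s Hs). pose proof (Q1_deriv s Hs).
    pose proof (cderiv_qden u u1 s (u_deriv s Hs)).
    pose proof (cderiv_qden1 u u1 s _ (u_deriv s Hs) (u1_deriv s Hs)).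
    eapply cderiv_eq; [unfold F1; cderiv_tac | ring].
  - exact (cderiv_qnum1 u u1 s _ (u_deriv s Hs) (u1_deriv s Hs)).
Qed.

End PulledBackRelation.

Lemma Cneq0_of_sub (X V W Y Z : C) : Y - Z = X * V / W -> Y <> Z -> X <> 0.
Proof.
  intros E H ->. apply H.
  replace Y with (Y - Z + Z) by ring. rewrite E. unfold Cdiv. ring.
Qed.

Lemma Cneq0_of_mult_eq1 (x y : C) : x * y = 1 -> x <> 0.
Proof. intros E ->. rewrite Cmult_0_l in E. injection E. lra. Qed.

Lemma RtoC_half : RtoC (1 / 2) = / RtoC 2.
Proof. rewrite <- RtoC_inv by lra. f_equal. lra. Qed.

(* From [H : Y <> Z], derive [X <> 0] where [Y - Z = X * V / W]: this turns the
   nondegeneracy hypotheses into the polynomial side conditions produced by [field]. *)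
Ltac neq0_from H V W :=
  refine (Cneq0_of_sub _ V W _ _ _ H); unfold t_of, tt_of, qden, qnum; field; auto.

Lemma PVI_jet_transform (s u p r A B Cc : C) :
  RtoC 2 * s + 1 <> 0 -> qden s u <> 0 ->
  t_of s <> 1 -> u <> 0 -> u <> 1 -> u <> t_of s ->
  tt_of s <> 0 -> tt_of s <> 1 -> A <> 0 -> A <> 1 -> A <> tt_of s ->
  let u1 := p * dt_of s in
  let u2 := r * dt_of s ^ 2 + p * ddt_of s in
  let A1 := B * dtt_of s in
  let A2 := Cc * dtt_of s ^ 2 + B * ddtt_of s in
  r = PVI_rhs (t_of s) u p ->
  A * qden s u ^ 2 = qnum s u ->
  A1 * qden s u ^ 2 + A * (RtoC 2 * qden s u * qden1 s u u1) = qnum1 s u u1 ->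
  A2 * qden s u ^ 2 + RtoC 2 * A1 * (RtoC 2 * qden s u * qden1 s u u1)
    + A * (RtoC 2 * (qden1 s u u1 ^ 2 + qden s u * qden2 s u1 u2)) = qnum2 s u u1 u2 ->
  Cc = PVI_rhs (tt_of s) A B.
Proof.
  intros Hs21 Hden Ht1 Hu0 Hu1 Hut Htt0 Htt1 HA0 HA1 HAt u1 u2 A1 A2 Hr E0 E1 E2.
  assert (Hs0 : s <> 0) by neq0_from Htt0 ((s + RtoC 2) ^ 3) ((RtoC 2 * s + 1) ^ 3).
  assert (Hs2 : s + RtoC 2 <> 0)
    by neq0_from Htt0 (s * (s + RtoC 2) ^ 2) ((RtoC 2 * s + 1) ^ 3).
  assert (Hs1 : s - 1 <> 0)
    by neq0_from Htt1 ((s - 1) ^ 2 * (s + 1)) ((RtoC 2 * s + 1) ^ 3).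
  assert (eA : A = qnum s u / qden s u ^ 2) by (rewrite <- E0; field; exact Hden).
  subst A.
  assert (HuD : u + s * (s + RtoC 2) <> 0)
    by neq0_from HA0 (u * (u + s * (s + RtoC 2))) (qden s u ^ 2).
  assert (HA1' : qnum s u - qden s u ^ 2 <> 0) by neq0_from HA1 1 (qden s u ^ 2).
  assert (HAt' : qnum s u * (RtoC 2 * s + 1) ^ 3 - s * (s + RtoC 2) ^ 3 * qden s u ^ 2 <> 0)
    by neq0_from HAt 1 (qden s u ^ 2 * (RtoC 2 * s + 1) ^ 3).
  assert (Hu1' : u - 1 <> 0) by neq0_from Hu1 1 1.
  assert (Htt1' : s * (s + RtoC 2) ^ 3 - (RtoC 2 * s + 1) ^ 3 <> 0)
    by neq0_from Htt1 1 ((RtoC 2 * s + 1) ^ 3).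
  assert (Hut' : u * (RtoC 2 * s + 1) - s ^ 3 * (s + RtoC 2) <> 0)
    by neq0_from Hut 1 (RtoC 2 * s + 1).
  assert (Ht1' : s ^ 3 * (s + RtoC 2) - (RtoC 2 * s + 1) <> 0)
    by neq0_from Ht1 1 (RtoC 2 * s + 1).
  assert (Hdtt : dtt_of s <> 0).
  { apply (Cneq0_of_mult_eq1 _
      ((RtoC 2 * s + 1) ^ 4 / (RtoC 2 * (s - 1) ^ 2 * (s + RtoC 2) ^ 2))).
    unfold dtt_of. field. auto. }
  assert (eC : Cc = (qnum2 s u u1 u2 - B * ddtt_of s * qden s u ^ 2
        - RtoC 2 * A1 * (RtoC 2 * qden s u * qden1 s u u1)
        - qnum s u / qden s u ^ 2 * (RtoC 2 * (qden1 s u u1 ^ 2 + qden s u * qden2 s u1 u2)))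
      / (dtt_of s ^ 2 * qden s u ^ 2))
    by (rewrite <- E2; unfold A2; field; auto).
  assert (eB : B = (qnum1 s u u1 - qnum s u / qden s u ^ 2 * (RtoC 2 * qden s u * qden1 s u u1))
      / (dtt_of s * qden s u ^ 2))
    by (rewrite <- E1; unfold A1; field; auto).
  subst Cc A1 B u1 u2 r. clear E0 E1 E2 A2.
  unfold PVI_rhs, t_of, tt_of, qnum, qnum1, qnum2, qden, qden1, qden2,
    dt_of, ddt_of, dtt_of, ddtt_of in *.
  rewrite RtoC_half.
  field. cbv beta. repeat split; auto.
Qed.

Lemma qt_of_relation (u s : C) : qden s u <> 0 -> qt_of u s * qden s u ^ 2 = qnum s u.
Proof. intros H. unfold qt_of, qnum, qden in *. field. exact H. Qed.

Lemma PVI_sol_at_cderiv q dq ddq t :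
  PVI_sol_at q dq ddq t -> cderiv q t (dq t) /\ cderiv dq t (ddq t).
Proof.
  intros (_ & _ & _ & _ & _ & Hloc & Hdd & _).
  exact (conj (locally_singleton _ _ Hloc) Hdd).
Qed.

Theorem theorem1p4 :
  forall (U : C -> Prop) (q dq ddq qt dqt ddqt : C -> C),
    open U ->
    (forall s, U s -> RtoC 2 * s + 1 <> 0 /\ PVI_sol_at q dq ddq (t_of s)) ->
    (forall s, U s ->
       (RtoC 2 * s + 1) * q (t_of s) + s ^ 2 <> 0 /\
       qt (tt_of s) = qt_of (q (t_of s)) s /\
       locally (tt_of s) (fun x => cderiv qt x (dqt x)) /\
       cderiv dqt (tt_of s) (ddqt (tt_of s))) ->
    (forall s, U s ->
       tt_of s <> 0 /\ tt_of s <> 1 /\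
       qt (tt_of s) <> 0 /\ qt (tt_of s) <> 1 /\ qt (tt_of s) <> tt_of s) ->
    forall s, U s -> PVI_sol_at qt dqt ddqt (tt_of s).
Proof.
  intros U q dq ddq qt dqt ddqt U_open Hq Hqt Hnondeg s Hs.
  assert (U_regular : forall z, U z -> RtoC 2 * z + 1 <> 0) by apply Hq.
  assert (q_deriv : forall z, U z -> cderiv q (t_of z) (dq (t_of z)))
    by (intros z Hz; eapply proj1, PVI_sol_at_cderiv, Hq, Hz).
  assert (dq_deriv : forall z, U z -> cderiv dq (t_of z) (ddq (t_of z)))
    by (intros z Hz; eapply proj2, PVI_sol_at_cderiv, Hq, Hz).
  assert (qt_deriv : forall z, U z -> cderiv qt (tt_of z) (dqt (tt_of z))).
  { intros z Hz. destruct (Hqt z Hz) as (_ & _ & Hloc & _).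
    exact (locally_singleton _ _ Hloc). }
  assert (dqt_deriv : forall z, U z -> cderiv dqt (tt_of z) (ddqt (tt_of z))) by apply Hqt.
  assert (qt_relation : forall z, U z ->
            qt (tt_of z) * qden z (q (t_of z)) ^ 2 = qnum z (q (t_of z))).
  { intros z Hz. destruct (Hqt z Hz) as (Hden & -> & _). exact (qt_of_relation _ _ Hden). }
  destruct (Hq s Hs) as (Hs21 & _ & Ht1 & Hu0 & Hu1 & Hut & _ & _ & Hrhs).
  destruct (Hqt s Hs) as (Hden & _ & Hloc & Hdd).
  destruct (Hnondeg s Hs) as (Htt0 & Htt1 & HA0 & HA1 & HAt).
  do 7 (split; [assumption|]).
  apply (PVI_jet_transform s (q (t_of s)) (dq (t_of s)) (ddq (t_of s))); auto.
  - exact (pulled_back_relation_deriv1 U q dq qt dqt U_open U_regular q_deriv qt_deriv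
             qt_relation s Hs).
  - exact (pulled_back_relation_deriv2 U q dq ddq qt dqt ddqt U_open U_regular q_deriv
             dq_deriv qt_deriv dqt_deriv qt_relation s Hs).
Qed.
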